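(* Let $P$ be a finite nonempty graded poset with rank levels $P_1,\dots,P_d$, and put $L_0=\emptyset$, $L_j=P_1\sqcup\cdots\sqcup P_j$ ($1\le j\le d$). Let $m\ge1$, and identify each lower ideal $I$ of $[m]\times P$ with the tuple $(I_1,\dots,I_m)$, $I_j=\{a\in P:(j,a)\in I\}$ (so $I_m\subseteq\cdots\subseteq I_1$ are lower ideals of $P$). Let $s\ge1$, $n_0\in\mathbb{N}$, $n_1,\dots,n_s\in\mathbb{P}$ with $\sum_{k=0}^s n_k=m$, and $0\le i_s<\cdots<i_1<d$. Then $$\mathfrak{X}_{[m]\times P}(L_d^{n_0},L_{i_1}^{n_1},\dots,L_{i_s}^{n_s})=(L_{i_1+1}^{n_0+1},L_{i_2+1}^{n_1},\dots,L_{i_s+1}^{n_{s-1}},L_0^{n_s-1}),$$ where $L^{r}$ denotes $r$ consecutive copies of $L$.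
   Context: A finite poset is graded if all maximal chains have the same length; then there is a unique rank function $r:P\to\mathbb{P}$ with minimal elements of rank $1$ and $r(x)=r(y)+1$ when $x$ covers $y$; the rank levels are $P_j=r^{-1}(j)$. $[m]=\{1<2<\cdots<m\}$, $[m]\times P$ carries the product order, $\mathbb{N}=\{0,1,\dots\}$, $\mathbb{P}=\{1,2,\dots\}$. For a finite poset $Q$ and a lower ideal $I$, $\mathfrak{X}_Q(I)=\{y\in Q:y\le x\text{ for some }x\in\min(Q\setminus I)\}$. *)

From HB Require Import structures.
From mathcomp Require Import all_boot all_order.
Set Implicit Arguments. Unset Strict Implicit. Unset Printing Implicit Defensive.
Import Order.Theory.
Local Open Scope order_scope.

Section PosetDefs.
Context {disp : Order.disp_t} (T : finPOrderType disp).

Definition is_chain (c : seq T) : bool := sorted (fun x y => x < y) c.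

Definition maximal_chain (c : seq T) : Prop :=
  is_chain c /\ forall c' : seq T, is_chain c' -> {subset c <= c'} -> {subset c' <= c}.

Definition minimal_elt (x : T) : bool := [forall y : T, ~~ (y < x)].

Definition covers (y x : T) : bool := (x < y) && [forall z : T, ~~ ((x < z) && (z < y))].

Definition is_rank_fun (r : T -> nat) : Prop :=
  (forall x, minimal_elt x -> r x = 1%N) /\
  (forall x y, covers y x -> r y = (r x).+1).

Definition Lset (r : T -> nat) (j : nat) : {set T} := [set a | (r a <= j)%N].

(* the product order on [m] x P, with [m] realized as 'I_m (j <-> j+1) *)
Definition prod_le (m : nat) (p q : 'I_m * T) : bool :=
  ((p.1 : nat) <= q.1)%N && (p.2 <= q.2).

Definition min_of (m : nat) (S : {set 'I_m * T}) : {set 'I_m * T} :=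
  [set x in S | [forall y in S, prod_le y x ==> (y == x)]].

Definition frakX (m : nat) (I : {set 'I_m * T}) : {set 'I_m * T} :=
  [set y | [exists x in min_of (~: I), prod_le y x]].

(* the lower ideal corresponding to a tuple (I_1,...,I_m), given as a list *)
Definition ideal_of_seq (m : nat) (s : seq {set T}) : {set 'I_m * T} :=
  [set p : 'I_m * T | p.2 \in nth set0 s (nat_of_ord p.1)].

Definition expand_blocks (b : seq (nat * {set T})) : seq {set T} :=
  flatten [seq nseq x.1 x.2 | x <- b].

End PosetDefs.

(* A tuple (L_{t_0}, ..., L_{t_{m-1}}) is the ideal {(j, a) | r a <= t_j}.  The
   minimal elements of its complement are the (j, b) with r b = t_j + 1 in the rows j
   where t drops strictly below all earlier values (lower covers decrease the rank by
   one), and by gradedness every a with r a <= t + 1 <= d lies below an element of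
   rank t + 1.  Hence (j, a) is in X of the ideal iff r a <= t_{j'} + 1 for some drop
   row j' >= j with t_{j'} < d.  For the given tuple the drop rows are the first rows
   of the blocks L_{i_k}, k >= 1, and the best admissible drop row for j yields the
   stated tuple. *)

From HB Require Import structures.
From mathcomp Require Import all_boot all_order.
From mathcomp Require Import zify.
Import Order.Theory.
Local Open Scope order_scope.
Set Implicit Arguments. Unset Strict Implicit.

Section FinitePoset.
Context {disp : Order.disp_t} (T : finPOrderType disp).
Implicit Types x y z : T.

Lemma strict_below_proper x y : x < y -> [set z | z < x] \proper [set z | z < y].
Proof.
move=> xy; apply/properP; split; last by exists x; rewrite !inE ?xy ?ltxx.
by apply/subsetP=> z; rewrite !inE => /lt_trans; apply.
Qed.

Lemma strict_above_proper x y : x < y -> [set z | y < z] \proper [set z | x < z].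
Proof.
move=> xy; apply/properP; split; last by exists y; rewrite !inE ?xy ?ltxx.
by apply/subsetP=> z; rewrite !inE; apply: lt_trans.
Qed.

Lemma lt_ind_down (P : T -> Prop) :
  (forall x, (forall y, y < x -> P y) -> P x) -> forall x, P x.
Proof.
move=> IH x; move: {2}#|_| (leqnn #|[set z | z < x]|) => k.
elim: k x => [|k IHk] x Hx; apply: IH => y /strict_below_proper/proper_card yx.
  by move: Hx yx; lia.
by apply: IHk; move: Hx yx; lia.
Qed.

Lemma lt_ind_up (P : T -> Prop) :
  (forall x, (forall y, x < y -> P y) -> P x) -> forall x, P x.
Proof.
move=> IH x; move: {2}#|_| (leqnn #|[set z | x < z]|) => k.
elim: k x => [|k IHk] x Hx; apply: IH => y /strict_above_proper/proper_card yx.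
  by move: Hx yx; lia.
by apply: IHk; move: Hx yx; lia.
Qed.

Lemma exists_lower_cover x y : y < x -> exists2 c, y <= c & covers x c.
Proof.
elim/lt_ind_up: y => y IH yx.
have [/existsP[z /andP[yz zx]] | none] := boolP [exists z, (y < z) && (z < x)].
  by have [c zc cx] := IH z yz zx; exists c => //; apply: le_trans (ltW yz) zc.
by exists y => //; rewrite /covers yx; apply/forallP => z; move/existsPn: none.
Qed.

Lemma exists_upper_cover x y : x < y -> exists2 c, covers c x & c <= y.
Proof.
elim/lt_ind_down: y => y IH xy.
have [/existsP[z /andP[xz zy]] | none] := boolP [exists z, (x < z) && (z < y)].
  by have [c xc cz] := IH z zy xz; exists c => //; apply: le_trans cz (ltW zy).
by exists y => //; rewrite /covers xy; apply/forallP => z; move/existsPn: none.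
Qed.

Lemma sorted_lt_comparable (s : seq T) a b : sorted <%O s ->
  a \in s -> b \in s -> (a <= b) || (b <= a).
Proof.
rewrite lt_sorted_pairwise; elim: s => //= x s IH /andP[xs Ps].
rewrite !inE => /predU1P[-> | as_] /predU1P[-> | bs].
- by rewrite lexx.
- by rewrite (ltW (allP xs _ bs)).
- by rewrite (ltW (allP xs _ as_)) orbT.
- exact: IH.
Qed.

Lemma saturated_path_mem x0 c w : path (fun a b => covers b a) x0 c ->
  x0 <= w -> w <= last x0 c -> {in c, forall z, (w <= z) || (z <= w)} ->
  w \in x0 :: c.
Proof.
elim: c x0 => [|y c IH] x0 /=.
  by move=> _ x0w wx0 _; rewrite inE eq_le wx0 x0w.
move=> /andP[/andP[_ /forallP noz] yc] x0w wl cmp.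
have [-> | wx0] := eqVneq w x0; first exact: mem_head.
rewrite inE (negbTE wx0) /=.
have /orP[wy | yw] := cmp y (mem_head _ _); last first.
  by apply: IH => // z zc; apply: cmp; rewrite inE zc orbT.
have [-> | wy'] := eqVneq w y; first exact: mem_head.
by have := noz w; rewrite lt_neqAle eq_sym wx0 x0w lt_neqAle wy' wy.
Qed.

Section Rank.
Variable r : T -> nat.
Hypothesis r_rank : is_rank_fun r.

Lemma rank_lt x y : y < x -> (r y < r x)%N.
Proof.
elim/lt_ind_down: x y => x IH y /exists_lower_cover[c yc cx].
rewrite (r_rank.2 _ _ cx) ltnS; have [-> // | ync] := eqVneq y c.
by apply/ltnW/IH; [case/andP: cx | rewrite lt_neqAle ync].
Qed.

Lemma rank_le x y : y <= x -> (r y <= r x)%N.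
Proof. by rewrite le_eqVlt => /predU1P[-> // | /rank_lt/ltnW]. Qed.

Lemma rank_gt0 x : (0 < r x)%N.
Proof.
have [/(r_rank.1 x) -> // | /forallPn[y]] := boolP (minimal_elt x).
by rewrite negbK => /rank_lt; lia.
Qed.

Lemma rank_gt1_lower_cover x : (1 < r x)%N -> exists2 c, c < x & r x = (r c).+1.
Proof.
have [/(r_rank.1 x) -> // | /forallPn[y]] := boolP (minimal_elt x).
rewrite negbK => /exists_lower_cover[c _ cx] _.
by exists c; [case/andP: cx | apply: r_rank.2].
Qed.

Definition rank_ideal m (f : nat -> nat) : {set 'I_m * T} :=
  [set p : 'I_m * T | (r p.2 <= f p.1)%N].

Lemma mem_min_rank_ideal m f (j : 'I_m) b :
  ((j, b) \in min_of (~: rank_ideal m f)) =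
  (r b == (f j).+1) && [forall j' : 'I_m, (j' < j)%N ==> (f j < f j')%N].
Proof.
rewrite !inE /= -ltnNge; apply/andP/andP => [[fjb /forall_inP minb] | ].
  split.
    rewrite eqn_leq fjb andbT leqNgt; apply/negP => rb.
    have [c cb rbc] := rank_gt1_lower_cover (leq_ltn_trans (ltn0Sn _) rb).
    have jc : (j, c) \in ~: rank_ideal m f by rewrite !inE /= -ltnNge; lia.
    have := implyP (minb _ jc); rewrite /prod_le /= leqnn (ltW cb).
    by move=> /(_ isT)/eqP[ceq]; rewrite ceq ltxx in cb.
  apply/forallP => j'; apply/implyP => j'j; rewrite ltnNge; apply/negP => fj'.
  have j'b : (j', b) \in ~: rank_ideal m f by rewrite !inE /= -ltnNge; lia.
  have := implyP (minb _ j'b); rewrite /prod_le /= (ltnW j'j) lexx.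
  by move=> /(_ isT)/eqP[/(congr1 val)/= ej]; move: j'j; rewrite ej ltnn.
case=> /eqP rb /forallP drop; split; first by rewrite rb.
apply/forall_inP => -[j' b']; rewrite !inE /= -ltnNge => fb'.
apply/implyP; rewrite /prod_le /= => /andP[j'j b'b].
have rb' := rank_le b'b.
have ej : j' = j.
  apply/val_inj/eqP; rewrite eqn_leq j'j leqNgt /=; apply/negP => /(implyP (drop j')).
  by move: fb' rb'; rewrite rb; lia.
subst j'; rewrite xpair_eqE eqxx /=; apply/eqP/le_anti; rewrite b'b /=.
have [-> // | ne] := eqVneq b' b.
have := rank_lt (_ : b' < b); rewrite lt_neqAle ne b'b.
by move=> /(_ isT); move: fb'; rewrite rb; lia.
Qed.

Lemma saturated_chain_to x : exists x0 c, [/\ minimal_elt x0,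
  path (fun a b => covers b a) x0 c, last x0 c = x & (size c).+1 = r x].
Proof.
elim/lt_ind_down: x => x IH.
have [xmin | /forallPn[y]] := boolP (minimal_elt x).
  by exists x, [::]; rewrite (r_rank.1 x xmin).
rewrite negbK => /exists_lower_cover[c _ cx].
have [x0 [cc [x0min pc lc sc]]] := IH c (andP cx).1.
exists x0, (rcons cc x); split => //.
- by rewrite rcons_path pc lc.
- by rewrite last_rcons.
- by rewrite size_rcons sc (r_rank.2 _ _ cx).
Qed.

Variable d : nat.
Hypothesis chains_d : forall c : seq T, maximal_chain c -> size c = d.

Lemma rank_maximal x : [forall z, ~~ (x < z)] -> r x = d.
Proof.
move=> /forallP xmax; have [x0 [c [x0min pc lc <-]]] := saturated_chain_to x.
rewrite -(chains_d (c := x0 :: c)) //; split.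
  by apply: sub_path pc => a b /andP[].
move=> c' c'_chain sub w wc'.
have cmp z : z \in x0 :: c -> (w <= z) || (z <= w).
  by move=> zc; apply: (sorted_lt_comparable c'_chain) => //; apply: sub.
apply: saturated_path_mem pc _ _ _.
- have /orP[wx0 | //] := cmp x0 (mem_head _ _).
  have [-> // | ne] := eqVneq w x0.
  by have := forallP x0min w; rewrite lt_neqAle ne wx0.
- have /orP[// | xw] := cmp _ (mem_last x0 c); rewrite lc in xw *.
  have [-> // | ne] := eqVneq w x.
  by have := xmax w; rewrite lt_neqAle eq_sym ne xw.
- by move=> z zc; apply: cmp; rewrite inE zc orbT.
Qed.

Lemma rank_le_height x : (r x <= d)%N.
Proof.
elim/lt_ind_up: x => x IH.
have [/rank_maximal -> // | /forallPn[y]] := boolP [forall z, ~~ (x < z)].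
by rewrite negbK => xy; apply: leq_trans (ltnW (rank_lt xy)) (IH y xy).
Qed.

Lemma exists_above_of_rank a t : (r a <= t <= d)%N -> exists2 b, a <= b & r b = t.
Proof.
elim/lt_ind_up: a => a IH /andP[rat td].
have [<- | ne] := eqVneq (r a) t; first by exists a.
have [/rank_maximal ad | /forallPn[y]] := boolP [forall z, ~~ (a < z)].
  by move: rat td ne; rewrite ad; lia.
rewrite negbK => /exists_upper_cover[c ca _].
have rct : (r c <= t <= d)%N by rewrite (r_rank.2 _ _ ca) td andbT; lia.
have [b cb <-] := IH c (andP ca).1 rct.
by exists b => //; apply: le_trans (ltW (andP ca).1) cb.
Qed.

Lemma mem_frakX_rank_ideal m f (j : 'I_m) a :
  ((j, a) \in frakX (rank_ideal m f)) =
  [exists j' : 'I_m, [&& (j <= j')%N, (f j' < d)%N,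
     [forall j'' : 'I_m, (j'' < j')%N ==> (f j' < f j'')%N] & (r a <= (f j').+1)%N]].
Proof.
rewrite inE; apply/exists_inP/existsP => [[[j' b]] | [j' /and4P[jj' fd drop ra]]].
  rewrite mem_min_rank_ideal /prod_le /= => /andP[/eqP rb drop] /andP[jj' ab].
  exists j'; rewrite jj' drop -rb rank_le //= andbT.
  by have := rank_le_height b; rewrite rb.
have [b ab rb] := exists_above_of_rank (t := (f j').+1) (introT andP (conj ra fd)).
exists (j', b); first by rewrite mem_min_rank_ideal rb eqxx drop.
by rewrite /prod_le /= jj' ab.
Qed.

Lemma ideal_of_rank_blocks m q (c t : nat -> nat) :
  ideal_of_seq m (expand_blocks [seq (c l, Lset r (t l)) | l <- iota 0 q]) =
  rank_ideal m (nth 0%N (flatten [seq nseq (c l) (t l) | l <- iota 0 q])).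
Proof.
set s := flatten _.
have -> : expand_blocks [seq (c l, Lset r (t l)) | l <- iota 0 q] = map (Lset r) s.
  rewrite /expand_blocks /s map_flatten -!map_comp; congr flatten.
  by apply: eq_map => l /=; rewrite map_nseq.
(* Beyond the end of the tuple [nth] returns [set0], which is [Lset r 0] as ranks are positive. *)
have Lset0 : Lset r 0 = set0 by apply/setP => x; rewrite !inE leqn0 eqn0Ngt rank_gt0.
apply/setP => -[j b]; rewrite !inE /=.
have [js | sj] := ltnP j (size s); first by rewrite (nth_map 0%N) // inE.
by rewrite !nth_default ?size_map // -Lset0 inE.
Qed.

End Rank.

End FinitePoset.

Section Blocks.
Variable c : nat -> nat.

Lemma prefix_sum_mono : {homo (fun k => \sum_(0 <= l < k) c l) : a b / (a <= b)%N >-> (a <= b)%N}.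
Proof. by move=> a b ab /=; rewrite (big_cat_nat (leq0n a) ab) leq_addr. Qed.

Lemma exists_block q j : (j < \sum_(0 <= l < q) c l)%N ->
  exists2 k, (k < q)%N & (\sum_(0 <= l < k) c l <= j < \sum_(0 <= l < k.+1) c l)%N.
Proof.
elim: q => [|q IH]; first by rewrite big_geq.
have [/IH[k kq jk] _ | qj jq] := ltnP j (\sum_(0 <= l < q) c l).
  by exists k => //; apply: ltnW.
by exists q; rewrite ?qj.
Qed.

Variables (A : Type) (x0 : A) (L : nat -> A).

Lemma size_flatten_nseq_iota q :
  size (flatten [seq nseq (c l) (L l) | l <- iota 0 q]) = (\sum_(0 <= l < q) c l)%N.
Proof.
rewrite size_flatten /shape -map_comp sumnE big_map /index_iota subn0.
by apply: eq_bigr => l _ /=; rewrite size_nseq.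
Qed.

Lemma nth_flatten_nseq_iota q k j : (k < q)%N ->
  (\sum_(0 <= l < k) c l <= j < \sum_(0 <= l < k.+1) c l)%N ->
  nth x0 (flatten [seq nseq (c l) (L l) | l <- iota 0 q]) j = L k.
Proof.
elim: q => // q IH; rewrite ltnS leq_eqVlt => kq /andP[kj jk].
have -> : iota 0 q.+1 = iota 0 q ++ [:: q] by rewrite -addn1 iotaD.
rewrite map_cat flatten_cat nth_cat size_flatten_nseq_iota /= cats0.
case/predU1P: kq => [ek | kq]; last by rewrite (leq_trans jk (prefix_sum_mono kq)) IH ?kj.
subst k; rewrite ltnNge kj /= nth_nseq ifT //.
by move: kj jk; rewrite big_nat_recr //=; lia.
Qed.

End Blocks.

Section Lemma2p5.
Context {disp : Order.disp_t} (T : finPOrderType disp).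
Variables (d : nat) (r : T -> nat) (m s : nat) (n i : nat -> nat).

Local Notation start k := (\sum_(0 <= l < k) n l)%N.

Definition lhs_rank k := if k is 0 then d else i k.
Definition rhs_size k := if k == 0 then (n 0 + 1)%N else if k == s then (n s).-1 else n k.
Definition rhs_rank k := if (k < s)%N then (i k.+1 + 1)%N else 0.

(* Row j of the left-hand (right-hand) tuple is [Lset r (fL j)] ([Lset r (fR j)]). *)
Local Notation fL := (nth 0%N (flatten [seq nseq (n l) (lhs_rank l) | l <- iota 0 s.+1])).
Local Notation fR := (nth 0%N (flatten [seq nseq (rhs_size l) (rhs_rank l) | l <- iota 0 s.+1])).

Lemma lhs_blocks : (n 0, Lset r d) :: [seq (n k, Lset r (i k)) | k <- iota 1 s] =
  [seq (n k, Lset r (lhs_rank k)) | k <- iota 0 s.+1].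
Proof. by congr (_ :: _); apply/eq_in_map => -[]; rewrite ?mem_iota. Qed.

Lemma rhs_start k : (1 <= k <= s)%N -> (\sum_(0 <= l < k) rhs_size l)%N = (start k).+1.
Proof.
case/andP=> k1 ks; rewrite big_ltn // [in RHS]big_ltn //.
rewrite /rhs_size /= addn1 addSn; congr (_ + _).+1.
by apply: eq_big_nat => l /andP[l1 lk]; rewrite (gtn_eqF l1) (ltn_eqF (leq_trans lk ks)).
Qed.

Lemma fL_block k j : (k <= s)%N -> (start k <= j < start k.+1)%N -> fL j = lhs_rank k.
Proof. exact: (@nth_flatten_nseq_iota n _ 0%N lhs_rank s.+1). Qed.

Hypothesis s_gt0 : (1 <= s)%N.

Lemma rhs_blocks : (n 0 + 1, Lset r (i 1 + 1))%N
    :: [seq (n k, Lset r (i k.+1 + 1)) | k <- iota 1 s.-1] ++ [:: ((n s).-1, Lset r 0)] =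
  [seq (rhs_size k, Lset r (rhs_rank k)) | k <- iota 0 s.+1].
Proof.
have -> : iota 0 s.+1 = 0 :: iota 1 s.-1 ++ [:: s] by rewrite -addn1 iotaD; case: (s) s_gt0.
rewrite /= map_cat /rhs_size /rhs_rank /= s_gt0 eqxx -[s == 0]negbK -lt0n s_gt0 ltnn.
congr (_ :: _ ++ _); apply/eq_in_map => k; rewrite mem_iota => /andP[k1 ks1].
have [k0 kns ks] : [/\ k != 0, k != s & (k < s)%N] by split; lia.
by rewrite (negbTE k0) (negbTE kns) ks.
Qed.

Hypothesis n_gt0 : forall k, (1 <= k <= s)%N -> (1 <= n k)%N.
Hypothesis sum_n : (\sum_(0 <= k < s.+1) n k)%N = m.

Lemma start_lt k : (1 <= k <= s)%N -> (start k < start k.+1)%N.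
Proof. by move=> k1s; rewrite big_nat_recr //= -[X in (X < _)%N]addn0 ltn_add2l n_gt0. Qed.

Lemma start_lt_m k : (k <= s)%N -> (start k < m)%N.
Proof.
move=> ks; rewrite -sum_n; apply: leq_ltn_trans (prefix_sum_mono n ks) (start_lt _).
by rewrite s_gt0 leqnn.
Qed.

Lemma rhs_total : (\sum_(0 <= l < s.+1) rhs_size l)%N = m.
Proof.
have ss : (1 <= s <= s)%N by rewrite s_gt0 leqnn.
rewrite big_nat_recr //= (rhs_start ss) /rhs_size eqxx (negbTE (lt0n_neq0 s_gt0)).
by have := n_gt0 ss; rewrite -sum_n big_nat_recr //=; lia.
Qed.

Lemma lhs_block_of j : (j < m)%N ->
  exists2 k, (k <= s)%N & (start k <= j < start k.+1)%N.
Proof. by rewrite -sum_n => /exists_block[k]; exists k. Qed.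

Lemma fL_start k : (1 <= k <= s)%N -> fL (start k) = i k.
Proof.
move=> k1s; rewrite (fL_block (k := k)) ?leqnn ?start_lt //; last by case/andP: k1s.
by case: k k1s.
Qed.

Hypothesis i_decr : forall k, (1 <= k < s)%N -> (i k.+1 < i k)%N.
Hypothesis i1_lt_d : (i 1 < d)%N.

Lemma lhs_rank_decr : {in [pred k | (k <= s)%N] &,
  {homo lhs_rank : k1 k2 / (k1 < k2)%N >-> (k2 < k1)%N}}.
Proof.
apply: homo_ltn_in => [y x z yx zy | k1 k2 _ | [|k] _].
- exact: ltn_trans zy yx.
- by rewrite !inE => k2s k3 /andP[_ /ltnW/leq_trans]; apply.
- by [].
- by rewrite inE => ks; apply: i_decr; rewrite ks.
Qed.

Lemma i_antitone k1 k2 : (1 <= k1)%N -> (k1 <= k2 <= s)%N -> (i k2 <= i k1)%N.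
Proof.
case: k1 => // k1 _ /andP[]; rewrite leq_eqVlt => /predU1P[-> // | k12] k2s.
case: k2 k12 k2s => // k2 k12 k2s; apply: ltnW.
exact: (lhs_rank_decr (ltnW (leq_trans k12 k2s)) k2s k12).
Qed.

Lemma lhs_drop_rowP (j : 'I_m) :
  reflect (exists2 k, (1 <= k <= s)%N & (j : nat) = start k)
    ((fL j < d)%N && [forall j' : 'I_m, (j' < j)%N ==> (fL j < fL j')%N]).
Proof.
apply: (iffP andP) => [[jd /forallP drop] | [k k1s jk]].
  have [k ks jk] := lhs_block_of (ltn_ord j); have [kj _] := andP jk.
  have k0 : k != 0 by apply: contraTneq jd => k0; rewrite (fL_block ks jk) k0 /= ltnn.
  exists k; first by rewrite lt0n k0.
  apply/eqP; rewrite eqn_leq kj andbT leqNgt; apply/negP => kj'.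
  have j1 : (j.-1 < m)%N by apply: leq_ltn_trans (leq_pred j) (ltn_ord j).
  have jb : (start k <= j.-1 < start k.+1)%N by move: jk kj'; lia.
  have := drop (Ordinal j1); rewrite /= (fL_block ks jb) (fL_block ks jk) ltnn implybF.
  by move=> /negP; apply; lia.
have ks : (k <= s)%N by case/andP: k1s.
have jblk : (start k <= j < start k.+1)%N by rewrite jk leqnn start_lt.
rewrite (fL_block ks jblk); split.
  by apply: (lhs_rank_decr (leq0n s) ks); case/andP: k1s.
apply/forallP => j'; apply/implyP => j'j.
have [k' k's jk'] := lhs_block_of (ltn_ord j'); rewrite (fL_block k's jk').
apply: lhs_rank_decr k's ks _; rewrite ltnNge; apply/negP => kk'.
by have := prefix_sum_mono n kk'; move: jk' j'j; rewrite jk; lia.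
Qed.

Hypothesis r_rank : is_rank_fun r.
Hypothesis chains_d : forall c : seq T, maximal_chain c -> size c = d.

Lemma mem_frakX_lhs (j : 'I_m) a :
  reflect (exists2 k, (1 <= k <= s)%N & (j <= start k)%N && (r a <= (i k).+1)%N)
    ((j, a) \in frakX (rank_ideal r m fL)).
Proof.
rewrite (mem_frakX_rank_ideal r_rank chains_d).
apply: (iffP existsP) => [[j' /and4P[jj' j'd drop ra]] | [k k1s /andP[jk ra]]].
  have [k k1s j'k] := lhs_drop_rowP j' (introT andP (conj j'd drop)).
  by exists k => //; rewrite -j'k jj' -(fL_start k1s) -j'k.
have ks : (k <= s)%N by case/andP: k1s.
set j' := Ordinal (start_lt_m ks).
have /andP[j'd drop] : (fL j' < d)%N && [forall j'' : 'I_m, (j'' < j')%N ==> (fL j' < fL j'')%N].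
  by apply/lhs_drop_rowP; exists k.
by exists j'; rewrite jk j'd drop /= (fL_start k1s) ra.
Qed.

Lemma frakX_lhs_rank_ideal : frakX (rank_ideal r m fL) = rank_ideal r m fR.
Proof.
apply/setP => -[j a]; rewrite [in RHS]inE /=.
have [k ks jk] : exists2 k, (k < s.+1)%N &
    (\sum_(0 <= l < k) rhs_size l <= j < \sum_(0 <= l < k.+1) rhs_size l)%N.
  by apply: exists_block; rewrite rhs_total.
rewrite (@nth_flatten_nseq_iota rhs_size _ 0%N rhs_rank _ _ _ ks jk) /rhs_rank.
apply/(mem_frakX_lhs j a)/idP => [[k2 k2s /andP[jk2 ra]] | ra].
  have bound_k : (k < k2)%N.
    rewrite ltnNge; apply/negP => k2k.
    have := prefix_sum_mono n k2k; move: jk; rewrite (rhs_start (k := k)); lia.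
  have k_s : (k < s)%N by move: bound_k k2s; lia.
  have : (i k2 <= i k.+1)%N by apply: i_antitone; rewrite // bound_k; case/andP: k2s.
  by rewrite k_s; lia.
case: ltnP ra => [k_s ra | s_k]; last by rewrite leqn0 eqn0Ngt (rank_gt0 r_rank).
exists k.+1; first by rewrite k_s.
by move: jk ra; rewrite (rhs_start (k := k.+1)) ?k_s //; lia.
Qed.

End Lemma2p5.

Theorem lemma2p5 (disp : Order.disp_t) (T : finPOrderType disp)
  (d : nat) (r : T -> nat) (m s : nat) (n i : nat -> nat) :
  (0 < #|T|)%N ->
  (forall c : seq T, maximal_chain c -> size c = d) ->
  is_rank_fun r ->
  (1 <= m)%N -> (1 <= s)%N ->
  (forall k, (1 <= k <= s)%N -> (1 <= n k)%N) ->
  (\sum_(0 <= k < s.+1) n k)%N = m ->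
  (forall k, (1 <= k < s)%N -> (i k.+1 < i k)%N) ->
  (i 1 < d)%N ->
  frakX (ideal_of_seq m (expand_blocks
           ((n 0, Lset r d) :: [seq (n k, Lset r (i k)) | k <- iota 1 s])))
  = ideal_of_seq m (expand_blocks
           ((n 0 + 1, Lset r (i 1 + 1))
              :: [seq (n k, Lset r (i k.+1 + 1)) | k <- iota 1 s.-1]
              ++ [:: ((n s).-1, Lset r 0)]))%N.
Proof.
move=> _ chains_d r_rank _ s_gt0 n_gt0 sum_n i_decr i1_lt_d.
rewrite lhs_blocks rhs_blocks // !(ideal_of_rank_blocks r_rank).
exact: frakX_lhs_rank_ideal.
Qed.
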